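(* For every polytope $P$ and every instance $S=((s_1,d_1),\dots,(s_n,d_n))$, letting $m=\max_{t\le T}|\{i:s_i\le t\le d_i\}|$, we have $OPT_A(S;P)=Disp(m;P)$.
   Context: Distances are Euclidean; $\partial P$ is the boundary of $P$. $Disp(n;P)=\max_{X_1,\dots,X_n\in P}\min\{dis(X_i,\partial P),dis(X_i,X_j):i\ne j\}$. An instance has $s_i<d_i$, $0=s_1\le\dots\le s_n$; point $i$ is present at time $t$ iff $s_i\le t\le d_i$; $T=\max_id_i$. For $X\in P^n$, $d_{min}(t;X)=\min\{dis(X_i,\partial P),dis(X_i,X_j)\}$ over present points $i\ne j$ at time $t$, and $OPT_A(S;P)=\max_X\min_{t\le T}d_{min}(t;X)$. *)

From HB Require Import structures.
From mathcomp Require Import all_boot all_order all_algebra.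
From mathcomp Require Import all_classical all_reals.
Set Implicit Arguments. Unset Strict Implicit. Unset Printing Implicit Defensive.
Import Order.TTheory GRing.Theory Num.Theory.
Local Open Scope ring_scope.
Local Open Scope classical_set_scope.

Section Dispersion.
Variables (R : realType) (dim : nat).
Notation pt := 'rV[R]_dim.

Definition edist (x y : pt) : R := Num.sqrt (\sum_(k < dim) (x 0 k - y 0 k) ^+ 2).

Definition polytope (P : set pt) : Prop :=
  exists (k : nat) (v : 'I_k.+1 -> pt),
    P = [set x | exists w : 'I_k.+1 -> R,
           (forall i, 0 <= w i) /\ \sum_i w i = 1 /\ x = \sum_i w i *: v i].

Definition boundary (P : set pt) : set pt :=
  [set x | forall e : R, 0 < e ->
     (exists y, P y /\ edist x y < e) /\ (exists y, ~ P y /\ edist x y < e)].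

Definition dist_set (x : pt) (A : set pt) : R := inf [set edist x y | y in A].

(* Disp(n;P) = max over X in P^n of min{dis(X_i,dP), dis(X_i,X_j) : i <> j},
   written as the supremum of the values v below that min. *)
Definition Disp (n : nat) (P : set pt) : R :=
  sup [set v : R | exists X : 'I_n -> pt, (forall i, P (X i)) /\
        forall i, v <= dist_set (X i) (boundary P) /\
                  forall j, j != i -> v <= edist (X i) (X j)].

Definition present (n : nat) (s d : 'I_n -> R) (t : R) (i : 'I_n) : bool :=
  (s i <= t) && (t <= d i).

Definition horizon (n : nat) (d : 'I_n -> R) : R := \big[Num.max/0]_(i < n) d i.

Definition npresent (n : nat) (s d : 'I_n -> R) (t : R) : nat :=
  #|[set i | present s d t i]|.

(* OPT_A(S;P) = max_X min_{t <= T} d_min(t;X), written as the supremum of the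
   values v below d_min(t;X) for every t <= T. *)
Definition OPT_A (n : nat) (s d : 'I_n -> R) (P : set pt) : R :=
  sup [set v : R | exists X : 'I_n -> pt, (forall i, P (X i)) /\
        forall t, t <= horizon d ->
        forall i, present s d t i ->
          v <= dist_set (X i) (boundary P) /\
          forall j, j != i -> present s d t j -> v <= edist (X i) (X j)].

End Dispersion.

(* At every moment at most m points are present, and the set of present
   points is a clique of the interval graph of the lifetimes [s_i, d_i].
   Interval graphs are perfect: colouring the intervals greedily by start time
   uses at most m colours, since an interval starting at time s_k conflicts only
   with earlier intervals still alive at s_k.  Placing point i at the position
   of colour c_i in an optimal dispersion of m points thus achieves Disp(m;P) at
   every moment; conversely, at a moment where m points are present, any online
   placement restricts to a placement of m points, so OPT_A <= Disp(m;P). *)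
From HB Require Import structures.
From mathcomp Require Import all_boot all_order all_algebra.
From mathcomp Require Import all_classical all_reals.
Import Order.TTheory GRing.Theory Num.Theory.
Local Open Scope ring_scope.

Lemma horizon_ge {R : realType} {n : nat} (d : 'I_n -> R) (i : 'I_n) :
  d i <= horizon d.
Proof. exact: le_bigmax. Qed.

Section IntervalColoring.
Context {R : realType} {n m : nat} {s d : 'I_n -> R}.
Hypothesis s_sorted : forall i j : 'I_n, (i <= j)%N -> s i <= s j.
Hypothesis s_le_d : forall i, s i <= d i.
Hypothesis npresent_start_le : forall k, (npresent s d (s k) <= m)%N.

Lemma greedy_prefix_coloring {k : nat} : (k <= n)%N ->
  exists c : 'I_n -> 'I_m,
    forall i j : 'I_n, (i < j < k)%N -> s j <= d i -> c i != c j.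
Proof.
have m_gt0 (k0 : 'I_n) : (0 < m)%N.
  apply: leq_trans (npresent_start_le k0); apply/card_gt0P.
  by exists k0; rewrite inE /present /= lexx s_le_d.
elim: k => [_ | k IHk lt_kn].
  by exists (fun i => Ordinal (m_gt0 i)) => i j; rewrite ltn0 andbF.
have [c c_ok] := IHk (ltnW lt_kn).
pose kk := Ordinal lt_kn.
pose A := [set i : 'I_n | (i < k)%N && (s kk <= d i)].
have card_A : (#|A| < m)%N.
  apply: leq_trans (npresent_start_le kk); apply: proper_card.
  apply/properP; split; last first.
    by exists kk; rewrite !inE /present /= ?lexx ?s_le_d ?ltnn.
  apply/fintype.subsetP => i; rewrite !inE /present /= => /andP[lt_ik le_kd].
  by rewrite le_kd andbT s_sorted // ltnW.
have [x] : exists x, x \in ~: (c @: A).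
  apply/card_gt0P; rewrite -(ltn_add2l #|c @: A|) addn0 cardsC card_ord.
  exact: leq_ltn_trans (leq_imset_card c A) card_A.
rewrite inE => x_free.
exists (fun i => if i == kk then x else c i) => i j /andP[lt_ij lt_jk] le_sd.
have -> : (i == kk) = false.
  by apply/negbTE; rewrite -val_eqE /= neq_ltn (leq_trans lt_ij lt_jk).
case: (eqVneq j kk) => [eq_jk | ne_jk].
  apply: contraNneq x_free => <-; apply: imset_f.
  by rewrite inE -eq_jk le_sd andbT; move: lt_ij; rewrite eq_jk.
apply: c_ok le_sd; rewrite lt_ij /= ltn_neqAle -ltnS lt_jk andbT.
by rewrite -val_eqE in ne_jk.
Qed.

Lemma interval_coloring : exists c : 'I_n -> 'I_m,
  forall t i j, i != j -> present s d t i -> present s d t j -> c i != c j.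
Proof.
have [c c_ok] := greedy_prefix_coloring (leqnn n).
exists c => t i j ne_ij /andP[si_t t_di] /andP[sj_t t_dj].
case: (ltngtP i j) => [lt_ij | lt_ji | eq_ij].
- by apply: c_ok (le_trans sj_t t_di); rewrite lt_ij ltn_ord.
- by rewrite eq_sym; apply: c_ok (le_trans si_t t_dj); rewrite lt_ji ltn_ord.
- by rewrite (val_inj eq_ij) eqxx in ne_ij.
Qed.

End IntervalColoring.

Local Open Scope classical_set_scope.

Section PlacementValues.
Context {R : realType} {dim : nat} (P : set 'rV[R]_dim).

Definition dispersion_values (m : nat) : set R :=
  [set v : R | exists X : 'I_m -> 'rV[R]_dim, (forall i, P (X i)) /\
     forall i, v <= dist_set (X i) (boundary P) /\
               forall j, j != i -> v <= edist (X i) (X j)].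

Definition online_values {n : nat} (s d : 'I_n -> R) : set R :=
  [set v : R | exists X : 'I_n -> 'rV[R]_dim, (forall i, P (X i)) /\
     forall t, t <= horizon d ->
     forall i, present s d t i ->
       v <= dist_set (X i) (boundary P) /\
       forall j, j != i -> present s d t j -> v <= edist (X i) (X j)].

Lemma online_values_sub_dispersion {n : nat} (s d : 'I_n -> R) (t : R) :
  t <= horizon d -> online_values s d `<=` dispersion_values (npresent s d t).
Proof.
move=> le_tT v [X [XP X_ok]].
pose e (k : 'I_(npresent s d t)) : 'I_n := enum_val k.
have e_present k : present s d t (e k) by have := enum_valP k; rewrite inE.
exists (X \o e); split=> [k | k]; first exact: XP.
have [X_bd X_sep] := X_ok t le_tT (e k) (e_present k).
split=> // k' ne_k'k; apply: X_sep (e_present k').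
by apply: contra ne_k'k => /eqP/enum_val_inj ->.
Qed.

Lemma dispersion_values_sub_online {n m : nat} {s d : 'I_n -> R}
    {c : 'I_n -> 'I_m} :
  (forall t i j, i != j -> present s d t i -> present s d t j -> c i != c j) ->
  dispersion_values m `<=` online_values s d.
Proof.
move=> c_proper v [Y [YP Y_ok]].
exists (Y \o c); split=> [i | t _ i i_present]; first exact: YP.
have [Y_bd Y_sep] := Y_ok (c i).
split=> // j ne_ji j_present; apply: Y_sep.
by apply: c_proper j_present i_present.
Qed.

End PlacementValues.

Theorem claim2 (R : realType) (dim : nat) (P : set 'rV[R]_dim)
  (hP : polytope P)
  (n : nat) (hn : (0 < n)%N) (s d : 'I_n -> R)
  (hsd : forall i, s i < d i)
  (hs0 : forall i : 'I_n, val i = 0%N -> s i = 0)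
  (hsort : forall i j : 'I_n, (i <= j)%N -> s i <= s j)
  (m : nat)
  (hm_att : exists t, t <= horizon d /\ npresent s d t = m)
  (hm_max : forall t, t <= horizon d -> (npresent s d t <= m)%N) :
  OPT_A s d P = Disp m P.
Proof.
have s_le_d i : s i <= d i := ltW (hsd i).
have npresent_start_le k : (npresent s d (s k) <= m)%N.
  exact: hm_max (le_trans (s_le_d k) (horizon_ge d k)).
have [c c_proper] := interval_coloring hsort s_le_d npresent_start_le.
have [t [le_tT npresent_t]] := hm_att.
change (sup (online_values P s d) = sup (dispersion_values P m)).
congr sup; apply/seteqP; split.
- by rewrite -npresent_t; exact: online_values_sub_dispersion.
- exact: (dispersion_values_sub_online P c_proper).
Qed.
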